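(* Let $(\Omega,\mathcal R,\mathcal K)$ be a bidirectional kinetic system satisfying the detailed balance property, and let $E$ be an energy of it. Let $U\subset\Omega$ be nonempty, $V=\Omega\setminus U$, $n_U\in(0,\infty)^{|U|}$, and consider the reduced system $(V,\mathcal R_V,\mathcal K[n_U])$. Assume that no $R\in\mathcal R$ has $\pi_VR=0$ and that every $R\in\mathcal R_V$ is a $1$-$1$ reaction. Let $n$ be a positive solution of the system with fluxes $$\frac{dn}{dt}=\sum_{R\in\mathcal R_s}RJ_R(n)+J^E(t),\qquad \pi_Un(0)=n_U.$$ Then $$\partial_tF(n)=-\mathcal D_R(n)+J^{ext}(n),$$ where $F(n)=\sum_{j\in\Omega}n_j\big(\log(n_je^{E(j)})-1\big)$, $$\mathcal D_R(n)=\sum_{R\in\mathcal R_s}K_{\pi_VR}[n_U]\prod_{i\in I(R)\cap V}n_i^{-R(i)}\Big(\frac{K_{-\pi_VR}[n_U]}{K_{\pi_VR}[n_U]}\prod_{i\in V}n_i^{R(i)}-1\Big)\log\Big(\frac{K_{-\pi_VR}[n_U]}{K_{\pi_VR}[n_U]}\prod_{j\in V}n_j^{R(j)}\Big),$$ and $J^{ext}(n)=\sum_{j\in U}J^E_j(t)\log(n_je^{E(j)})$.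
   Context: A chemical network is $(\Omega,\mathcal R)$ with $\Omega=\{1,\dots,N\}$ and $\mathcal R$ a finite set of nonzero vectors of $\mathbb Z^N$. $I(R)=\{i:R(i)<0\}$, $F(R)=\{i:R(i)>0\}$. Bidirectional: $R\in\mathcal R\Rightarrow-R\in\mathcal R$. $\mathcal R_s$ contains exactly one of each pair $\{R,-R\}$ (the one with $\min I(R)<\min F(R)$); the matrix of reactions $\mathbf R$ has the elements $R_1,\dots$ of $\mathcal R_s$ as columns. Kinetic system: rates $\mathcal K:\mathcal R\to(0,\infty)$, $K_R=\mathcal K(R)$. Fluxes: $J_R(n)=K_R\prod_{j\in I(R)}n_j^{-R(j)}-K_{-R}\prod_{j\in F(R)}n_j^{R(j)}$. Detailed balance: there is $\bar N\in(0,\infty)^N$ with $J_R(\bar N)=0$ for all $R\in\mathcal R_s$. An energy is any $E\in\mathbb R^N$ with $\mathbf R^TE=w$, $w(i)=\log(K_{-R_i}/K_{R_i})$. External fluxes: $J^E_j(t)=-\sum_{R\in\mathcal R_s}R(j)J_R(n(t))$ (scalar) for $j\in U$, and $J^E(t)=\sum_{j\in U}J^E_j(t)e_j$. Reduction: $\pi_Av=(v(i))_{i\in A}$; $\mathcal R_V=\{\pi_V\bar R:\bar R\in\mathcal R,\pi_V\bar R\ne0\}$; $R\in\mathcal R_V$ is $1$-$1$ if exactly one $\bar R\in\mathcal R$ has $\pi_V\bar R=R$; reduced rates $K_R[n_U]=\sum_{\bar R\in\mathcal R:\pi_V\bar R=R}K_{\bar R}\prod_{s\in U\cap I(\bar R)}n_s^{-\bar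 R(s)}$. *)

From HB Require Import structures.
From mathcomp Require Import all_boot all_order all_algebra.
From mathcomp Require Import all_classical all_reals all_analysis.
Set Implicit Arguments. Unset Strict Implicit. Unset Printing Implicit Defensive.
Import Order.TTheory GRing.Theory Num.Theory.
Import numFieldNormedType.Exports.
Local Open Scope ring_scope.

(* Species Omega = 'I_N; a reaction is a vector of Z^N. *)
Definition reaction (N : nat) := {ffun 'I_N -> int}.

Definition zero_reaction (N : nat) : reaction N := [ffun => 0%R].

Definition ropp (N : nat) (r : reaction N) : reaction N := [ffun i => - r i].

Definition Iset (N : nat) (r : reaction N) : {set 'I_N} := [set i | r i < 0].
Definition Fset (N : nat) (r : reaction N) : {set 'I_N} := [set i | 0 < r i].

(* min of a set of indices; the empty set gets N, which plays the role of +oo *)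
Definition minidx (N : nat) (A : {set 'I_N}) : nat := \big[minn/N]_(i in A) (i : nat).

(* R_s : the representatives with min I(R) < min F(R) *)
Definition in_Rs (N : nat) (r : reaction N) : bool :=
  (minidx (Iset r) < minidx (Fset r))%N.
Definition Rs (N : nat) (RR : seq (reaction N)) : seq (reaction N) :=
  [seq r <- RR | in_Rs r].

Definition chem_network (N : nat) (RR : seq (reaction N)) : Prop :=
  uniq RR /\ (forall r, r \in RR -> r != zero_reaction N).

Definition bidirectional (N : nat) (RR : seq (reaction N)) : Prop :=
  forall r, r \in RR -> ropp r \in RR.

Definition flux (R : realType) (N : nat) (K : reaction N -> R) (r : reaction N)
  (n : 'I_N -> R) : R :=
  K r * \prod_(j in Iset r) n j ^ (- r j) - K (ropp r) * \prod_(j in Fset r) n j ^ (r j).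

Definition detailed_balance (R : realType) (N : nat) (RR : seq (reaction N))
  (K : reaction N -> R) : Prop :=
  exists Nb : 'I_N -> R, (forall j, 0 < Nb j) /\
    (forall r, r \in Rs RR -> flux K r Nb = 0).

Definition is_energy (R : realType) (N : nat) (RR : seq (reaction N))
  (K : reaction N -> R) (E : 'I_N -> R) : Prop :=
  forall r, r \in Rs RR -> \sum_j (r j)%:~R * E j = ln (K (ropp r) / K r).

(* pi_V, represented as the vector of Z^N vanishing outside V *)
Definition piV (N : nat) (V : {set 'I_N}) (r : reaction N) : reaction N :=
  [ffun i => if i \in V then r i else 0].

Definition RV (N : nat) (RR : seq (reaction N)) (V : {set 'I_N}) : seq (reaction N) :=
  [seq piV V r | r <- RR & piV V r != zero_reaction N].

Definition one_one (N : nat) (RR : seq (reaction N)) (V : {set 'I_N})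
  (rv : reaction N) : Prop :=
  count (fun r => piV V r == rv) RR = 1%N.

Definition Kred (R : realType) (N : nat) (RR : seq (reaction N)) (K : reaction N -> R)
  (U : {set 'I_N}) (nU : 'I_N -> R) (rv : reaction N) : R :=
  \sum_(r <- RR | piV (~: U) r == rv)
     K r * \prod_(s in U :&: Iset r) nU s ^ (- r s).

Definition JE (R : realType) (N : nat) (RR : seq (reaction N)) (K : reaction N -> R)
  (n : 'I_N -> R) (j : 'I_N) : R :=
  - \sum_(r <- Rs RR) (r j)%:~R * flux K r n.

Definition Fenergy (R : realType) (N : nat) (E : 'I_N -> R) (n : 'I_N -> R) : R :=
  \sum_j n j * (ln (n j * expR (E j)) - 1).

Definition DR (R : realType) (N : nat) (RR : seq (reaction N)) (K : reaction N -> R)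
  (U : {set 'I_N}) (nU : 'I_N -> R) (n : 'I_N -> R) : R :=
  \sum_(r <- Rs RR)
    (Kred RR K U nU (piV (~: U) r)
      * \prod_(i in Iset r :&: ~: U) n i ^ (- r i)
      * (Kred RR K U nU (ropp (piV (~: U) r)) / Kred RR K U nU (piV (~: U) r)
           * \prod_(i in ~: U) n i ^ (r i) - 1)
      * ln (Kred RR K U nU (ropp (piV (~: U) r)) / Kred RR K U nU (piV (~: U) r)
           * \prod_(j in ~: U) n j ^ (r j))).

Definition Jext (R : realType) (N : nat) (RR : seq (reaction N)) (K : reaction N -> R)
  (E : 'I_N -> R) (U : {set 'I_N}) (n : 'I_N -> R) : R :=
  \sum_(j in U) JE RR K n j * ln (n j * expR (E j)).

From HB Require Import structures.
From mathcomp Require Import all_boot all_order all_algebra.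
From mathcomp Require Import all_classical all_reals all_analysis.
From mathcomp Require Import ring.
Import Order.TTheory GRing.Theory Num.Theory.
Import numFieldNormedType.Exports.
Local Open Scope ring_scope.

(* Along a solution the species of U are frozen: by definition of J^E their
   right-hand side vanishes, so the mean value theorem and right continuity at 0
   give n_U(t) = n_U.  Since (x (log (x e^e) - 1))' = x' log (x e^e), the
   derivative of F is sum_j n_j' log (n_j e^E(j)): the external fluxes contribute
   J^ext and, E being an energy, the internal ones contribute
   sum_R J_R log (K_-R / K_R prod_j n_j^R(j)).  As every reduced reaction is 1-1,
   its reduced rate is K_R times the frozen factor prod_(U & I(R)) n_U^-R, and
   substituting this into D_R turns its R-summand into
   - J_R log (K_-R / K_R prod_j n_j^R(j)). *)

Section Logarithms.
Context {R : realType}.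

Lemma ln_exprz (x : R) (z : int) : 0 < x -> ln (x ^ z) = z%:~R * ln x.
Proof.
move=> x_gt0; case: z => k.
  by rewrite -exprnP lnXn // mulr_natl.
by rewrite NegzE -exprnN lnV ?posrE ?exprn_gt0 // lnXn // mulrNz mulNr mulr_natl.
Qed.

Lemma ln_prod (I : finType) (P : pred I) (g : I -> R) :
  (forall i, P i -> 0 < g i) -> ln (\prod_(i | P i) g i) = \sum_(i | P i) ln (g i).
Proof.
move=> g_gt0.
suff [] : 0 < \prod_(i | P i) g i /\ ln (\prod_(i | P i) g i) = \sum_(i | P i) ln (g i) by [].
elim/big_rec2: _ => [|i p s Pi [p_gt0 <-]]; first by rewrite ln1.
by rewrite mulr_gt0 ?g_gt0 // lnM ?posrE ?g_gt0.
Qed.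

Lemma sum_mul_ln_expR {N : nat} (r : reaction N) (x E : 'I_N -> R) (c : R) :
  (forall i, 0 < x i) -> 0 < c -> \sum_j (r j)%:~R * E j = ln c ->
  \sum_j (r j)%:~R * ln (x j * expR (E j)) = ln (c * \prod_j x j ^ r j).
Proof.
move=> x_gt0 c_gt0 rE_eq.
rewrite lnM ?posrE ?prodr_gt0 // => [|i _]; last exact: exprz_gt0.
rewrite ln_prod => [|i _]; last exact: exprz_gt0.
rewrite -rE_eq -big_split /=; apply: eq_bigr => j _.
by rewrite lnM ?posrE ?expR_gt0 // expRK ln_exprz // mulrDr addrC.
Qed.

End Logarithms.

Section Exponents.
Context {R : fieldType} {N : nat}.
Implicit Types (r : reaction N) (x : 'I_N -> R) (A : {set 'I_N}).

Lemma Iset_ropp r : Iset (ropp r) = Fset r.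
Proof. by apply/setP => i; rewrite !inE ffunE oppr_lt0. Qed.

Lemma ropp_piV V r : ropp (piV V r) = piV V (ropp r).
Proof. by apply/ffunP => i; rewrite !ffunE; case: ifP; rewrite ?oppr0. Qed.

Lemma prod_exprz_Fset A x r : (forall i, x i != 0) ->
  \prod_(i in A :&: Fset r) x i ^ r i
    = \prod_(i in A) x i ^ r i * \prod_(i in A :&: Iset r) x i ^ (- r i).
Proof.
move=> x_neq0.
have setI_cond B F : \prod_(i in A :&: B) F i = \prod_(i in A) (if i \in B then F i else 1).
  by rewrite -big_mkcondr; apply: eq_bigl => i; rewrite inE.
rewrite !setI_cond -big_split /=; apply: eq_bigr => i _; rewrite !inE.
case: ltgtP => [||<-]; rewrite ?mulr1 ?expr0z //.
by rewrite -invr_expz mulfV // expfz_neq0.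
Qed.

End Exponents.

Section Reduction.
Context {R : realType} {N : nat} {RR : seq (reaction N)} {K : reaction N -> R}.
Context {U : {set 'I_N}}.
Implicit Types (r : reaction N) (x : 'I_N -> R).

Lemma flux_mass_action r x : K r != 0 -> (forall i, x i != 0) ->
  flux K r x = K r * \prod_(i in Iset r) x i ^ (- r i)
                 * (1 - K (ropp r) / K r * \prod_i x i ^ r i).
Proof.
move=> Kr_neq0 x_neq0.
have prodT : \prod_(i in [set: 'I_N]) x i ^ r i = \prod_i x i ^ r i.
  by apply: eq_bigl => i; rewrite finset.in_setT.
by rewrite /flux -(finset.setTI (Fset r)) prod_exprz_Fset // finset.setTI prodT; field.
Qed.

Lemma eq_Kred {nU x : 'I_N -> R} : {in U, nU =1 x} -> Kred RR K U nU =1 Kred RR K U x.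
Proof.
move=> eq_nU_x rv; apply: eq_bigr => r _; congr (_ * _).
by apply: eq_bigr => i /setIP[iU _]; rewrite eq_nU_x.
Qed.

Lemma Kred_one_one x r : r \in RR -> one_one RR (~: U) (piV (~: U) r) ->
  Kred RR K U x (piV (~: U) r) = K r * \prod_(i in U :&: Iset r) x i ^ (- r i).
Proof.
move=> rRR; rewrite /one_one -size_filter /Kred -(big_filter RR).
have : r \in [seq r' <- RR | piV (~: U) r' == piV (~: U) r] by rewrite mem_filter eqxx.
case: [seq _ <- _ | _] => [|r' [|//]] //=.
by rewrite inE => /eqP -> _; rewrite big_seq1.
Qed.

Section OneOneReaction.
Variables (x : 'I_N -> R) (r : reaction N).
Hypotheses (x_neq0 : forall i, x i != 0) (rRR : r \in RR) (roppRR : ropp r \in RR).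
Hypotheses (Kr_neq0 : K r != 0) (one_one_r : one_one RR (~: U) (piV (~: U) r)).
Hypothesis one_one_ropp : one_one RR (~: U) (piV (~: U) (ropp r)).

Lemma Kred_mass_action :
  Kred RR K U x (piV (~: U) r) * \prod_(i in Iset r :&: ~: U) x i ^ (- r i)
    = K r * \prod_(i in Iset r) x i ^ (- r i).
Proof.
by rewrite Kred_one_one // -mulrA [in RHS](big_setID U) finset.setIC finset.setDE.
Qed.

Lemma Kred_ratio :
  Kred RR K U x (ropp (piV (~: U) r)) / Kred RR K U x (piV (~: U) r)
    * \prod_(i in ~: U) x i ^ r i
    = K (ropp r) / K r * \prod_i x i ^ r i.
Proof.
rewrite ropp_piV !Kred_one_one // Iset_ropp.
rewrite (eq_bigr (fun i => x i ^ r i)) => [|i _]; last by rewrite ffunE opprK.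
rewrite prod_exprz_Fset // [in RHS](bigID (mem U)) /=.
rewrite [X in _ = _ * (_ * X)](eq_bigl (fun i => i \in ~: U)) => [|i]; last by rewrite !inE.
have P_neq0 : \prod_(i in U :&: Iset r) x i ^ (- r i) != 0.
  by apply/prodf_neq0 => i _; rewrite expfz_neq0.
by field; rewrite Kr_neq0 P_neq0.
Qed.

Lemma Kred_dissipation :
  Kred RR K U x (piV (~: U) r) * \prod_(i in Iset r :&: ~: U) x i ^ (- r i)
    * (Kred RR K U x (ropp (piV (~: U) r)) / Kred RR K U x (piV (~: U) r)
         * \prod_(i in ~: U) x i ^ r i - 1)
    * ln (Kred RR K U x (ropp (piV (~: U) r)) / Kred RR K U x (piV (~: U) r)
         * \prod_(i in ~: U) x i ^ r i)
  = - (flux K r x * ln (K (ropp r) / K r * \prod_i x i ^ r i)).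
Proof. by rewrite Kred_ratio Kred_mass_action flux_mass_action //; ring. Qed.

End OneOneReaction.

Lemma Rs_flux_ln_eq_DR {E nU x : 'I_N -> R} :
  bidirectional RR -> (forall r, r \in RR -> 0 < K r) -> is_energy RR K E ->
  (forall r, r \in RR -> one_one RR (~: U) (piV (~: U) r)) ->
  (forall i, 0 < x i) -> {in U, nU =1 x} ->
  \sum_j (\sum_(r <- Rs RR) (r j)%:~R * flux K r x) * ln (x j * expR (E j))
    = - DR RR K U nU x.
Proof.
move=> bid K_gt0 energy one_one_RR x_gt0 nU_x.
rewrite /DR -sumrN (eq_bigr _ (fun j _ => mulr_suml _ _ _ _)) exchange_big /=.
apply: eq_big_seq => r rRs.
have rRR : r \in RR by move: rRs; rewrite mem_filter => /andP[].
have x_neq0 i : x i != 0 by rewrite gt_eqF.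
have roppRR := bid r rRR.
have Kr_neq0 : K r != 0 by rewrite gt_eqF ?K_gt0.
rewrite !(eq_Kred nU_x) (Kred_dissipation _ _ x_neq0 rRR roppRR Kr_neq0
  (one_one_RR r rRR) (one_one_RR _ roppRR)) opprK.
rewrite -(sum_mul_ln_expR r x E _ x_gt0 _ (energy r rRs)) ?divr_gt0 ?K_gt0 //.
by rewrite mulr_sumr; apply: eq_bigr => j _; ring.
Qed.

End Reduction.

Section Derivatives.
Context {R : realType}.

Lemma is_derive_Fenergy_term (e : R) {f : R -> R} {t df : R} : 0 < f t -> is_derive t 1 f df ->
  is_derive t 1 (fun s => f s * (ln (f s * expR e) - 1)) (df * ln (f t * expR e)).
Proof.
move=> ft_gt0 df_t.
have fe_gt0 : 0 < f t * expR e by rewrite mulr_gt0 ?expR_gt0.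
have dfe : is_derive t 1 (fun s => f s * expR e) (df * expR e).
  apply: is_derive_eq (is_deriveM df_t (is_derive_cst (expR e) t 1)) _.
  by rewrite scaler0 add0r mulrC.
have dln := is_derive1_comp (g := fun s => f s * expR e) (is_derive1_ln fe_gt0) dfe.
rewrite [X in is_derive _ _ X](_ : _ = f * ((@ln R) \o (fun s => f s * expR e) - cst 1)) //.
apply: is_derive_eq (is_deriveM df_t (is_deriveB dln (is_derive_cst (1 : R) t 1))) _.
rewrite /GRing.scale !fctE /= subr0.
by field; rewrite !gt_eqF ?expR_gt0.
Qed.

Lemma is_derive0_cst {f : R -> R} {T : R} :
  (f x @[x --> 0^'+] --> f 0)%classic -> (forall t, 0 < t < T -> is_derive t 1 f 0) ->
  forall t, 0 < t < T -> f t = f 0.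
Proof.
move=> f_cont0 df0 t /andP[t_gt0 tT].
have df_itv x : x \in `]0, t[ -> is_derive x 1 f 0.
  by rewrite in_itv /= => /andP[x_gt0 xt]; apply: df0; rewrite x_gt0 (lt_trans xt tT).
have f_cont : {within `[0, t], continuous f}%classic.
  apply: derivable_oo_LRcontinuous_within; split => //.
  - by move=> x /df_itv dfx; exact: ex_derive.
  - apply/cvg_at_left_filter/differentiable_continuous/derivable1_diffP.
    exact/ex_derive/df0/andP.
have [c _] := MVT t_gt0 df_itv f_cont.
by rewrite mul0r => /eqP; rewrite subr_eq0 => /eqP.
Qed.

Lemma is_derive_Fenergy {N : nat} (E : 'I_N -> R) {n : R -> 'I_N -> R} {dn : 'I_N -> R} {t : R} :
  (forall j, 0 < n t j) -> (forall j, is_derive t 1 (fun s => n s j) (dn j)) ->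
  is_derive t 1 (fun s => Fenergy E (n s)) (\sum_j dn j * ln (n t j * expR (E j))).
Proof.
move=> n_gt0 dn_t.
have := is_derive_sum (fun j => is_derive_Fenergy_term (E j) (n_gt0 j) (dn_t j)).
by rewrite fct_sumE.
Qed.

End Derivatives.

Theorem proposition7p4 (R : realType) (N : nat) (RR : seq (reaction N))
  (K : reaction N -> R) (E : 'I_N -> R) (U : {set 'I_N}) (nU : 'I_N -> R)
  (T : R) (n : R -> 'I_N -> R) :
  chem_network RR -> bidirectional RR ->
  (forall r, r \in RR -> 0 < K r) ->
  detailed_balance RR K -> is_energy RR K E ->
  U != finset.set0 ->
  (forall j, j \in U -> 0 < nU j) ->
  (forall r, r \in RR -> piV (~: U) r != zero_reaction N) ->
  (forall rv, rv \in RV RR (~: U) -> one_one RR (~: U) rv) ->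
  0 < T ->
  (forall t, 0 <= t < T -> forall j, 0 < n t j) ->
  (forall t, 0 < t < T -> forall j,
     is_derive t 1 (fun s => n s j)
       (\sum_(r <- Rs RR) (r j)%:~R * flux K r (n t)
        + (if j \in U then JE RR K (n t) j else 0))) ->
  (forall j, ((fun s => n s j) @ 0^'+ --> n 0 j)%classic) ->
  (forall j, j \in U -> n 0 j = nU j) ->
  forall t, 0 < t < T ->
    is_derive t 1 (fun s => Fenergy E (n s))
      (- DR RR K U nU (n t) + Jext RR K E U (n t)).
Proof.
move=> _ bid K_gt0 _ energy _ _ piV_neq0 one_one_RV _ n_gt0 dn n_cont n0U t t_in.
have nt_gt0 j : 0 < n t j by apply: n_gt0; case/andP: t_in => /ltW -> ->.
have frozen : {in U, nU =1 n t}.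
  move=> j jU; rewrite -n0U //; symmetry.
  apply: (is_derive0_cst (n_cont j)) t_in => s s_in.
  by have := dn s s_in j; rewrite jU /JE addrN.
have one_one_RR r : r \in RR -> one_one RR (~: U) (piV (~: U) r).
  by move=> rRR; apply/one_one_RV/mapP; exists r; rewrite // mem_filter piV_neq0.
apply: is_derive_eq (is_derive_Fenergy E nt_gt0 (dn t t_in)) _.
rewrite (eq_bigr _ (fun j _ => mulrDl _ _ _)) big_split /=.
rewrite (Rs_flux_ln_eq_DR bid K_gt0 energy one_one_RR nt_gt0 frozen) /Jext.
by congr (_ + _); rewrite [RHS]big_mkcond; apply: eq_bigr => j _; case: ifP; rewrite ?mul0r.
Qed.
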